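(* Let $\mathbf f=(f_1,\dots,f_n)\in\mathcal G_0^n$. (a) $\mathbf f^*\in\mathcal G_0^n$, $R[\mathbf f^*]$ is the reversed digraph $R[\mathbf f]^{-1}=\{(j,i):(i,j)\in R[\mathbf f]\}$, and $\mathbf f^*$ is generic (resp. strongly generic) if $\mathbf f$ is. (b) $\mathbf f\odot\mathbf f\in\mathcal G_0^n$, $R[\mathbf f\odot\mathbf f]=R[\mathbf f]$, and $\mathbf f\odot\mathbf f$ is generic (resp. strongly generic) if $\mathbf f$ is. (c) If $\mathbf g\in\mathcal G_{00}^n$, then $\mathbf g\odot\mathbf f\in\mathcal G_0^n$, $R[\mathbf g\odot\mathbf f]=R[\mathbf f]$, and $\mathbf g\odot\mathbf f$ is generic (resp. strongly generic) if $\mathbf f$ is. (d) If $h\in\mathcal G$, then $\rho_h\mathbf f\in\mathcal G^n$ and $R[\rho_h\mathbf f]=R[\mathbf f]$. (e) If $\pi$ is a permutation of $[n]$, then $\pi\mathbf f\in\mathcal G_0^n$, $R[\pi\mathbf f]=\pi R[\mathbf f]$, and $\pi\mathbf f$ is generic (resp. strongly generic) if $\mathbf f$ is.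
   Context: $\mathcal G$ is the group of strictly increasing continuous maps $f:[-1,1]\to[-1,1]$ with $f(\pm1)=\pm1$; $i$ the identity; $\mathcal G_0=\{f\in\mathcal G:\int_{-1}^1f=0\}$; $\mathcal G_{00}$ the odd elements of $\mathcal G$. $f^*(t)=-f(-t)$, $f^e(t)=\tfrac12(f(t)+f(-t))$, $Q(f,g)=\int_{-1}^1f(g^{-1}(t))\,dt$. For $f_1,f_2\in\mathcal G$, $f_1\odot f_2(t)=\tfrac12(f_1(2t+1)-1)$ for $t\in[-1,0]$ and $\tfrac12(f_2(2t-1)+1)$ for $t\in[0,1]$. For $\mathbf f,\mathbf g\in\mathcal G^n$, $h\in\mathcal G$, $\pi$ a permutation of $[n]$: $\mathbf f^*=(f_1^*,\dots,f_n^* )$, $\mathbf g\odot\mathbf f=(g_1\odot f_1,\dots,g_n\odot f_n)$, $\rho_h\mathbf f=(f_1\circ h,\dots,f_n\circ h)$, $\pi\mathbf f=(f_{\pi^{-1}1},\dots,f_{\pi^{-1}n})$. For a digraph $R$ on $[n]$, $\pi R=\{(\pi i,\pi j):(i,j)\in R\}$. $R[\mathbf f]$ is the digraph on $[n]$ with $(i,j)\in R[\mathbf f]$ iff $Q(f_j,f_i)>0$. $\mathbf f\in\mathcal G_0^n$ is generic if $\{i,f_1,\dots,f_n\}$ is linearly independent and $Q(f_i,f_j)\neq0$ for $i\neq j$; strongly generic if $\{f_1^e,\dots,f_n^e\}$ is linearly independent and $Q(f_i,f_j)\neq0$ for $i\ne j$. *)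

From Stdlib Require Import Reals ClassicalEpsilon.
From Coquelicot Require Import Coquelicot.
From mathcomp Require Import all_boot fingroup perm.

Set Implicit Arguments.
Unset Strict Implicit.
Unset Printing Implicit Defensive.

Local Open Scope R_scope.

Definition I11 (t : R) : Prop := -1 <= t <= 1.

(* f : [-1,1] -> [-1,1] continuous, strictly increasing, f(-1) = -1, f 1 = 1.
   Functions are modelled as R -> R; only their values on [-1,1] matter. *)
Definition inG (f : R -> R) : Prop :=
  (forall t, I11 t -> I11 (f t)) /\
  (forall t, I11 t -> forall eps, 0 < eps -> exists delta, 0 < delta /\
      forall s, I11 s -> Rabs (s - t) < delta -> Rabs (f s - f t) < eps) /\
  (forall s t, I11 s -> I11 t -> s < t -> f s < f t) /\
  f (-1) = -1 /\ f 1 = 1.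

Definition inG0 (f : R -> R) : Prop := inG f /\ RInt f (-1) 1 = 0.

Definition inG00 (f : R -> R) : Prop := inG f /\ forall t, I11 t -> f (- t) = - f t.

Definition fstar (f : R -> R) : R -> R := fun t => - f (- t).

Definition feven (f : R -> R) : R -> R := fun t => (f t + f (- t)) / 2.

Definition ginv (g : R -> R) (t : R) : R :=
  epsilon (inhabits 0) (fun s => I11 s /\ g s = t).

Definition Q (f g : R -> R) : R := RInt (fun t => f (ginv g t)) (-1) 1.

Definition odot (f1 f2 : R -> R) : R -> R :=
  fun t => if Rle_dec t 0 then (f1 (2 * t + 1) - 1) / 2
           else (f2 (2 * t - 1) + 1) / 2.

Definition vec (n : nat) := 'I_n -> R -> R.

Definition inGn n (f : vec n) : Prop := forall i, inG (f i).
Definition inG0n n (f : vec n) : Prop := forall i, inG0 (f i).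
Definition inG00n n (f : vec n) : Prop := forall i, inG00 (f i).

Definition vstar n (f : vec n) : vec n := fun i => fstar (f i).
Definition vodot n (g f : vec n) : vec n := fun i => odot (g i) (f i).
Definition rho n (h : R -> R) (f : vec n) : vec n := fun i => fun t => f i (h t).
Definition pvec n (pi : 'S_n) (f : vec n) : vec n := fun i => f ((pi^-1)%g i).

Definition digraph (n : nat) := 'I_n -> 'I_n -> Prop.
Definition Rdig n (f : vec n) : digraph n := fun i j => Q (f j) (f i) > 0.
Definition rev_dig n (D : digraph n) : digraph n := fun i j => D j i.
Definition perm_dig n (pi : 'S_n) (D : digraph n) : digraph n :=
  fun a b => exists i j, D i j /\ a = pi i /\ b = pi j.
Definition dig_eq n (D1 D2 : digraph n) : Prop := forall i j, D1 i j <-> D2 i j.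

Definition Qnonzero n (f : vec n) : Prop :=
  forall i j : 'I_n, i <> j -> Q (f i) (f j) <> 0.

Definition generic n (f : vec n) : Prop :=
  (forall (c0 : R) (c : 'I_n -> R),
     (forall t, I11 t -> c0 * t + \big[Rplus/0]_(k < n) (c k * f k t) = 0) ->
     c0 = 0 /\ forall k, c k = 0) /\
  Qnonzero f.

Definition strongly_generic n (f : vec n) : Prop :=
  (forall c : 'I_n -> R,
     (forall t, I11 t -> \big[Rplus/0]_(k < n) (c k * feven (f k) t) = 0) ->
     forall k, c k = 0) /\
  Qnonzero f.

(* Everything reduces to how [Q] transforms.  Since [ginv] commutes with the
   operations involved, substituting in the integral gives
   [Q (fstar f) (fstar g) = - Q f g],
   [Q (odot a1 b1) (odot a2 b2) = (Q a1 a2 + Q b1 b2) / 4],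
   [Q (f \o h) (g \o h) = Q f g], and [Q g1 g2 = 0] for odd [g1], [g2].
   The reversal of the digraph in (a) needs the antisymmetry [Q f g = - Q g f]:
   this is Young's equality [int phi + int phi^-1 = 0] for [phi = f \o ginv g]
   in [G], obtained by telescoping the elementary bound
   [|D y - D x| <= (y - x) (phi y - phi x)] over ever finer uniform partitions.
   Genericity is preserved because the new functions, restricted to [0,1] or
   symmetrised, are fixed linear images of the old ones. *)

From Stdlib Require Import Reals Lra ClassicalEpsilon.
From Coquelicot Require Import Coquelicot.
From mathcomp Require Import all_boot fingroup perm Rstruct.

Set Implicit Arguments.
Unset Strict Implicit.
Unset Printing Implicit Defensive.

Local Open Scope R_scope.

Definition maps_I11 (f : R -> R) : Prop := forall t, I11 t -> I11 (f t).

Definition cont_on_I11 (f : R -> R) : Prop :=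
  forall t, I11 t -> forall eps, 0 < eps -> exists delta, 0 < delta /\
    forall s, I11 s -> Rabs (s - t) < delta -> Rabs (f s - f t) < eps.

Definition incr_on_I11 (f : R -> R) : Prop :=
  forall s t, I11 s -> I11 t -> s < t -> f s < f t.

(* Members of [G] are constrained only on [-1,1]; precomposing with [clamp]
   gives continuous functions on all of [R], to which the library's
   continuity and integration theorems apply. *)
Definition clamp (t : R) : R := Rmax (-1) (Rmin 1 t).

Lemma I11_opp t : I11 t -> I11 (- t).
Proof. rewrite /I11; lra. Qed.

Lemma I11_between a b t : I11 a -> I11 b -> Rmin a b <= t <= Rmax a b -> I11 t.
Proof. rewrite /I11 /Rmin /Rmax; case: Rle_dec; lra. Qed.

Lemma I11_of_open t : Rmin (-1) 1 < t < Rmax (-1) 1 -> I11 t.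
Proof. by rewrite /I11 /Rmin /Rmax; case: Rle_dec; lra. Qed.

Lemma clamp_I11 t : I11 (clamp t).
Proof. rewrite /clamp /I11 /Rmax /Rmin; repeat case: Rle_dec; lra. Qed.

Lemma clamp_id t : I11 t -> clamp t = t.
Proof. rewrite /clamp /I11 /Rmax /Rmin; repeat case: Rle_dec; lra. Qed.

Lemma clamp_le t : t <= -1 -> clamp t = -1.
Proof. rewrite /clamp /Rmax /Rmin; repeat case: Rle_dec; lra. Qed.

Lemma clamp_ge t : 1 <= t -> clamp t = 1.
Proof. rewrite /clamp /Rmax /Rmin; repeat case: Rle_dec; lra. Qed.

Lemma clamp_lipschitz s t : Rabs (clamp s - clamp t) <= Rabs (s - t).
Proof.
rewrite /clamp /Rmax /Rmin; repeat case: Rle_dec; rewrite /Rabs;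
  repeat case: Rcase_abs; lra.
Qed.

Lemma cont_on_I11_ext f g :
  (forall t, I11 t -> f t = g t) -> cont_on_I11 f -> cont_on_I11 g.
Proof.
move=> efg cf t It eps eps_gt0; have [d [d_gt0 Hd]] := cf t It eps eps_gt0.
by exists d; split=> // s Is st; rewrite -!efg //; apply: Hd.
Qed.

Lemma cont_on_I11_comp f g :
  cont_on_I11 f -> cont_on_I11 g -> maps_I11 g -> cont_on_I11 (fun t => f (g t)).
Proof.
move=> cf cg mg t It eps eps_gt0.
have [d [d_gt0 Hd]] := cf (g t) (mg t It) eps eps_gt0.
have [d' [d'_gt0 Hd']] := cg t It d d_gt0.
by exists d'; split=> // s Is st; apply: Hd; auto.
Qed.

Lemma cont_on_I11_continuity f : continuity f -> cont_on_I11 f.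
Proof.
move=> cf t _ eps eps_gt0; have [d [d_gt0 Hd]] := cf t eps eps_gt0.
exists d; split=> // s _ st; have [->|ts] := Req_dec s t.
  by rewrite Rminus_diag Rabs_R0.
by apply: (Hd s); do 2 split=> //; apply: not_eq_sym.
Qed.

Lemma continuity_clamp_comp f : cont_on_I11 f -> continuity (fun t => f (clamp t)).
Proof.
move=> cf t eps eps_gt0; have [d [d_gt0 Hd]] := cf _ (clamp_I11 t) eps eps_gt0.
exists d; split=> // s [_ st]; apply: Hd; first exact: clamp_I11.
exact: Rle_lt_trans (clamp_lipschitz s t) st.
Qed.

Lemma ex_RInt_cont_on_I11 f a b :
  cont_on_I11 f -> I11 a -> I11 b -> ex_RInt f a b.
Proof.
move=> cf Ia Ib; apply: (ex_RInt_ext (fun t => f (clamp t))).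
  by move=> t tab; rewrite clamp_id //; apply: (I11_between Ia Ib); lra.
apply: ex_RInt_continuous => t _.
exact/continuity_pt_filterlim/continuity_clamp_comp.
Qed.

Lemma inG_intro f : maps_I11 f -> cont_on_I11 f -> incr_on_I11 f ->
  f (-1) = -1 -> f 1 = 1 -> inG f.
Proof. by move=> m c i e1 e2; split; [|split; [|split]]. Qed.

Section GroupElement.
Variable f : R -> R.
Hypothesis fG : inG f.

Lemma inG_maps : maps_I11 f. Proof. by case: fG. Qed.
Lemma inG_cont : cont_on_I11 f. Proof. by case: fG => _ []. Qed.
Lemma inG_incr : incr_on_I11 f. Proof. by case: fG => _ [_ []]. Qed.
Lemma inG_m1 : f (-1) = -1. Proof. by case: fG => _ [_ [_ []]]. Qed.
Lemma inG_1 : f 1 = 1. Proof. by case: fG => _ [_ [_ []]]. Qed.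

Lemma ex_RInt_inG : ex_RInt f (-1) 1.
Proof. by apply: ex_RInt_cont_on_I11; [exact: inG_cont | rewrite /I11; lra..]. Qed.

Lemma inG_onto t : I11 t -> exists s, I11 s /\ f s = t.
Proof.
move=> It; have cf := continuity_clamp_comp inG_cont.
have I1 : I11 1 by rewrite /I11; lra.
have Im1 : I11 (-1) by rewrite /I11; lra.
have t_in : Rmin (f (clamp (-1))) (f (clamp 1)) <= t <= Rmax (f (clamp (-1))) (f (clamp 1)).
  rewrite !clamp_id // inG_m1 inG_1 /Rmin /Rmax.
  by case: Rle_dec; rewrite /I11 in It; lra.
have [s [s_in fs]] := IVT_gen _ _ _ _ cf t_in.
have Is : I11 s by move: s_in; rewrite /I11 /Rmin /Rmax; case: Rle_dec; lra.
by exists s; split=> //; rewrite -fs clamp_id.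
Qed.

End GroupElement.

Section Increasing.
Variable g : R -> R.
Hypothesis ig : incr_on_I11 g.

Lemma incr_on_I11_le s u : I11 s -> I11 u -> s <= u -> g s <= g u.
Proof. by move=> Is Iu [su|<-]; [left; apply: ig | right]. Qed.

Lemma incr_on_I11_lt_rev s u : I11 s -> I11 u -> g s < g u -> s < u.
Proof.
move=> Is Iu gsu; have [//|us] := Rlt_le_dec s u.
by have := incr_on_I11_le Iu Is us; lra.
Qed.

Lemma incr_on_I11_inj s u : I11 s -> I11 u -> g s = g u -> s = u.
Proof.
move=> Is Iu gsu; case: (Rtotal_order s u) => [su|[//|us]].
  by have := ig Is Iu su; lra.
by have := ig Iu Is us; lra.
Qed.

Lemma incr_onto_cont : maps_I11 g ->
  (forall s, I11 s -> exists t, I11 t /\ g t = s) -> cont_on_I11 g.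
Proof.
move=> mg og t It eps eps_gt0; have := mg t It; rewrite /I11 => gt_in.
have [d1 [d1_gt0 up]] :
    exists d, 0 < d /\ forall s, I11 s -> s < t + d -> g s < g t + eps.
  have [ge1|lt1] := Rle_lt_dec 1 (g t + eps / 2).
    by exists 1; split=> [|s Is _]; [lra | have := mg s Is; rewrite /I11; lra].
  have [b [Ib gb]] := og (g t + eps / 2) ltac:(rewrite /I11; lra).
  have tb : t < b by apply: incr_on_I11_lt_rev; rewrite ?gb //; lra.
  by exists (b - t); split=> [|s Is sb]; [lra | have := ig Is Ib ltac:(lra); lra].
have [d2 [d2_gt0 down]] :
    exists d, 0 < d /\ forall s, I11 s -> t - d < s -> g t - eps < g s.
  have [le_m1|gt_m1] := Rle_lt_dec (g t - eps / 2) (-1).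
    by exists 1; split=> [|s Is _]; [lra | have := mg s Is; rewrite /I11; lra].
  have [b [Ib gb]] := og (g t - eps / 2) ltac:(rewrite /I11; lra).
  have bt : b < t by apply: incr_on_I11_lt_rev; rewrite ?gb //; lra.
  by exists (t - b); split=> [|s Is bs]; [lra | have := ig Ib Is ltac:(lra); lra].
exists (Rmin d1 d2); split=> [|s Is /Rabs_def2 [st ts]]; first exact: Rmin_pos.
have := Rmin_l d1 d2; have := Rmin_r d1 d2 => ? ?.
by apply: Rabs_def1; [have := up s Is | have := down s Is]; lra.
Qed.

End Increasing.

Lemma ginv_eq h s t : incr_on_I11 h -> I11 s -> h s = t -> ginv h t = s.
Proof.
move=> ih Is hst; rewrite /ginv.
have [Ie he] := epsilon_spec (inhabits 0) (fun s => I11 s /\ h s = t) (ex_intro _ s (conj Is hst)).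
by apply: (incr_on_I11_inj ih) => //; rewrite he.
Qed.

Section Inverse.
Variable h : R -> R.
Hypothesis hG : inG h.

Lemma ginv_spec t : I11 t -> I11 (ginv h t) /\ h (ginv h t) = t.
Proof.
by move=> It; apply: (epsilon_spec _ (fun s => I11 s /\ h s = t)); apply: inG_onto.
Qed.

Lemma ginv_I11 : maps_I11 (ginv h).
Proof. by move=> t /ginv_spec []. Qed.

Lemma ginvKV t : I11 t -> h (ginv h t) = t.
Proof. by move=> /ginv_spec []. Qed.

Lemma ginvK s : I11 s -> ginv h (h s) = s.
Proof. by move=> Is; apply: ginv_eq => //; apply: inG_incr. Qed.

Lemma inG_ginv : inG (ginv h).
Proof.
have ih := inG_incr hG; have I1 : I11 1 by rewrite /I11; lra.
have Im1 : I11 (-1) by rewrite /I11; lra.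
have incr : incr_on_I11 (ginv h).
  move=> s t Is It st; apply: (incr_on_I11_lt_rev ih); try exact: ginv_I11.
  by rewrite !ginvKV.
apply: inG_intro => //; first exact: ginv_I11.
- apply: incr_onto_cont => //; first exact: ginv_I11.
  by move=> s Is; exists (h s); split; [exact: inG_maps | exact: ginvK].
- by apply: ginv_eq => //; apply: inG_m1.
- by apply: ginv_eq => //; apply: inG_1.
Qed.

Lemma ginvV s : I11 s -> ginv (ginv h) s = h s.
Proof.
move=> Is; apply: ginv_eq; first exact: (inG_incr inG_ginv).
  exact: inG_maps.
exact: ginvK.
Qed.

End Inverse.

Lemma inG_comp f g : inG f -> inG g -> inG (fun t => f (g t)).
Proof.
move=> fG gG; apply: inG_intro.
- by move=> t It; do 2 apply: inG_maps => //.
- by apply: cont_on_I11_comp; [exact: inG_cont | exact: inG_cont | exact: inG_maps].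
- move=> s t Is It st; apply: (inG_incr fG); try exact: inG_maps.
  exact: (inG_incr gG).
- by rewrite !inG_m1.
- by rewrite !inG_1.
Qed.

Lemma ginv_comp f g t : inG f -> inG g -> I11 t ->
  ginv (fun s => f (g s)) t = ginv g (ginv f t).
Proof.
move=> fG gG It; apply: ginv_eq; first exact: (inG_incr (inG_comp fG gG)).
  by do 2 apply: ginv_I11 => //.
by rewrite !ginvKV //; exact: ginv_I11.
Qed.

Lemma cont_on_I11_opp : cont_on_I11 Ropp.
Proof.
move=> t _ eps eps_gt0; exists eps; split=> // s _ st.
by rewrite -Rabs_Ropp; replace (- (- s - - t)) with (s - t) by ring.
Qed.

Lemma inG_fstar f : inG f -> inG (fstar f).
Proof.
move=> fG; rewrite /fstar; apply: inG_intro.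
- by move=> t It; apply/I11_opp/inG_maps/I11_opp.
- apply: cont_on_I11_comp cont_on_I11_opp _ _.
    apply: cont_on_I11_comp cont_on_I11_opp _; first exact: inG_cont.
    by move=> t /I11_opp.
  by move=> t It; apply/inG_maps/I11_opp.
- move=> s t Is It st; suff : f (- t) < f (- s) by lra.
  by apply: (inG_incr fG); [apply: I11_opp.. | lra].
- by rewrite (_ : - -1 = 1) ?(inG_1 fG); ring.
- by rewrite (inG_m1 fG); ring.
Qed.

Lemma ginv_fstar g t : inG g -> I11 t -> ginv (fstar g) t = fstar (ginv g) t.
Proof.
move=> gG It; apply: ginv_eq; first exact: (inG_incr (inG_fstar gG)).
  by apply/I11_opp/ginv_I11/I11_opp.
by rewrite /fstar Ropp_involutive ginvKV ?Ropp_involutive //; apply: I11_opp.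
Qed.

Lemma RInt_fstar phi : ex_RInt phi (-1) 1 -> RInt (fstar phi) (-1) 1 = - RInt phi (-1) 1.
Proof.
move=> /RInt_correct /is_RInt_swap ex_phi; apply: is_RInt_unique.
by apply: is_RInt_comp_opp; move: ex_phi; congr is_RInt; ring.
Qed.

Lemma RInt_odd phi : ex_RInt phi (-1) 1 ->
  (forall t, I11 t -> phi (- t) = - phi t) -> RInt phi (-1) 1 = 0.
Proof.
move=> ex_phi odd_phi.
suff : RInt phi (-1) 1 = RInt (fstar phi) (-1) 1 by rewrite RInt_fstar //; lra.
apply: RInt_ext => t t_in; rewrite /fstar odd_phi ?Ropp_involutive //.
exact: I11_of_open.
Qed.

Lemma odot_left a b s : s <= 0 -> odot a b s = (a (2 * s + 1) - 1) / 2.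
Proof. by rewrite /odot; case: Rle_dec. Qed.

Lemma odot_right a b s : a 1 = 1 -> b (-1) = -1 -> 0 <= s ->
  odot a b s = (b (2 * s - 1) + 1) / 2.
Proof.
rewrite /odot => a1 bm1 s_ge0; case: Rle_dec => // s_le0 /=.
have -> : 2 * s + 1 = 1 by lra.
have -> : 2 * s - 1 = -1 by lra.
by rewrite a1 bm1; lra.
Qed.

Lemma continuity_half_affine F u m :
  continuity F -> continuity (fun s => (F (2 * s + u) + m) / 2).
Proof.
move=> cF; have c1 : continuity (fun s => 2 * s + u) by reg.
have c2 : continuity (fun x => (x + m) / 2) by reg.
exact: (continuity_comp _ _ (continuity_comp _ _ c1 cF) c2).
Qed.

Section Concatenation.
Variables a b : R -> R.
Hypotheses (aG : inG a) (bG : inG b).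

Let odot_r s : 0 <= s -> odot a b s = (b (2 * s - 1) + 1) / 2.
Proof. by apply: odot_right; [exact: inG_1 | exact: inG_m1]. Qed.

Lemma cont_on_I11_odot : cont_on_I11 (odot a b).
Proof.
pose ext s := (a (clamp (2 * s + 1)) + -1) / 2 + (b (clamp (2 * s - 1)) + 1) / 2.
apply: (@cont_on_I11_ext ext).
  move=> s Is; rewrite /ext; have [s_le0|s_gt0] := Rle_lt_dec s 0.
    rewrite odot_left // (clamp_le (t := 2 * s - 1)); last lra.
    by rewrite clamp_id ?(inG_m1 bG); [lra | rewrite /I11 in Is *; lra].
  rewrite odot_r; last lra.
  rewrite (clamp_ge (t := 2 * s + 1)); last lra.
  by rewrite (clamp_id (t := 2 * s - 1)) ?(inG_1 aG); [lra | rewrite /I11 in Is *; lra].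
have ca := continuity_half_affine 1 (-1) (continuity_clamp_comp (inG_cont aG)).
have cb := continuity_half_affine (-1) 1 (continuity_clamp_comp (inG_cont bG)).
exact/cont_on_I11_continuity/(continuity_plus _ _ ca cb).
Qed.

Lemma inG_odot : inG (odot a b).
Proof.
have [ma mb] := (inG_maps aG, inG_maps bG).
apply: inG_intro.
- move=> s Is; have [s_le0|s_gt0] := Rle_lt_dec s 0.
    by rewrite odot_left //; have := ma (2 * s + 1); rewrite /I11 in Is *; lra.
  by rewrite odot_r; [have := mb (2 * s - 1) | lra]; rewrite /I11 in Is *; lra.
- exact: cont_on_I11_odot.
- move=> s t Is It st; have [t_le0|t_gt0] := Rle_lt_dec t 0.
    rewrite !odot_left; try lra.
    by have := inG_incr aG (s := 2 * s + 1) (t := 2 * t + 1); rewrite /I11 in Is It *; lra.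
  rewrite (odot_r (s := t)); last lra.
  have := inG_incr bG (s := 2 * s - 1) (t := 2 * t - 1).
  have [s_le0|s_gt0] := Rle_lt_dec s 0.
    rewrite odot_left //; have := ma (2 * s + 1).
    by have := inG_incr bG (s := -1) (t := 2 * t - 1); rewrite (inG_m1 bG) /I11 in Is It *; lra.
  by rewrite odot_r; [rewrite /I11 in Is It *; lra | lra].
- rewrite odot_left; last lra.
  have -> : 2 * -1 + 1 = -1 by lra.
  by rewrite (inG_m1 aG); lra.
- rewrite odot_r; last lra.
  have -> : 2 * 1 - 1 = 1 by lra.
  by rewrite (inG_1 bG); lra.
Qed.

End Concatenation.

Lemma odot_comp a b c d t : inG a -> inG b -> inG c -> inG d -> I11 t ->
  odot a b (odot c d t) = odot (fun s => a (c s)) (fun s => b (d s)) t.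
Proof.
move=> aG bG cG dG It; have [t_le0|t_gt0] := Rle_lt_dec t 0.
  have J : I11 (2 * t + 1) by rewrite /I11 in It *; lra.
  rewrite !odot_left //; last by have := inG_maps cG J; rewrite /I11; lra.
  by have -> : 2 * ((c (2 * t + 1) - 1) / 2) + 1 = c (2 * t + 1) by field.
have J : I11 (2 * t - 1) by rewrite /I11 in It *; lra.
have [a1 bm1] := (inG_1 aG, inG_m1 bG).
rewrite !odot_right ?(inG_1 cG) ?(inG_m1 dG) ?a1 ?bm1 //; try lra.
  by have -> : 2 * ((d (2 * t - 1) + 1) / 2) - 1 = d (2 * t - 1) by field.
by have := inG_maps dG J; rewrite /I11; lra.
Qed.

Lemma odot_id a b t : (forall s, I11 s -> a s = s) -> (forall s, I11 s -> b s = s) ->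
  I11 t -> odot a b t = t.
Proof.
move=> ida idb It; have [I1 Im1] : I11 1 /\ I11 (-1) by rewrite /I11; lra.
have [t_le0|t_gt0] := Rle_lt_dec t 0.
  by rewrite odot_left // ida; [field | rewrite /I11 in It *; lra].
rewrite odot_right ?ida ?idb //; try lra.
by rewrite /I11 in It *; lra.
Qed.

Lemma ginv_odot a b t : inG a -> inG b -> I11 t ->
  ginv (odot a b) t = odot (ginv a) (ginv b) t.
Proof.
move=> aG bG It; have [aG' bG'] := (inG_ginv aG, inG_ginv bG).
apply: ginv_eq => //; first exact: (inG_incr (inG_odot aG bG)).
  exact: (inG_maps (inG_odot aG' bG')).
by rewrite odot_comp //; apply: odot_id => // s Is; apply: ginvKV.
Qed.

Lemma is_RInt_half_affine F u m l r A :
  is_RInt F (2 * l + u) (2 * r + u) A ->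
  is_RInt (fun s => (F (2 * s + u) + m) / 2) l r (A / 4 + (r - l) * m / 2).
Proof.
move=> /(is_RInt_comp_lin F 2 u) /(is_RInt_scal _ _ _ (/ 4)) iF.
have := is_RInt_plus _ _ _ _ _ _ iF (is_RInt_const l r (m / 2)).
have -> : A / 4 + (r - l) * m / 2 = plus (scal (/ 4) A) (scal (r - l) (m / 2)).
  by rewrite /plus /scal /= /mult /=; field.
by apply: is_RInt_ext => s _; rewrite /plus /scal /= /mult /=; field.
Qed.

Lemma RInt_odot a b : ex_RInt a (-1) 1 -> ex_RInt b (-1) 1 ->
  RInt (odot a b) (-1) 1 = (RInt a (-1) 1 + RInt b (-1) 1) / 4.
Proof.
move=> /RInt_correct ia /RInt_correct ib; apply: is_RInt_unique.
have {}ia : is_RInt a (2 * -1 + 1) (2 * 0 + 1) (RInt a (-1) 1).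
  by move: ia; congr is_RInt; ring.
have {}ib : is_RInt b (2 * 0 - 1) (2 * 1 - 1) (RInt b (-1) 1).
  by move: ib; congr is_RInt; ring.
have il : is_RInt (odot a b) (-1) 0 (RInt a (-1) 1 / 4 + (0 - -1) * -1 / 2).
  apply: is_RInt_ext (is_RInt_half_affine (m := -1) ia) => s.
  by rewrite /Rmin /Rmax; case: Rle_dec => _ s_in; rewrite odot_left; lra.
have ir : is_RInt (odot a b) 0 1 (RInt b (-1) 1 / 4 + (1 - 0) * 1 / 2).
  apply: is_RInt_ext (is_RInt_half_affine (m := 1) ib) => s.
  by rewrite /Rmin /Rmax /odot /Rminus; case: Rle_dec => _ s_in; case: Rle_dec => /=; lra.
have := is_RInt_Chasles _ _ _ _ _ _ il ir; congr is_RInt.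
by rewrite /plus /=; field.
Qed.

Lemma eq_of_nat_mul_le x y C :
  (forall N, (0 < N)%N -> INR N * Rabs (x - y) <= C) -> x = y.
Proof.
move=> bound; have [//|neq] := Req_dec x y.
have pos : 0 < Rabs (x - y) by apply: Rabs_pos_lt; lra.
have [N big] := INR_archimed _ (Rabs C) pos.
have [N0|N_gt0] := posnP N.
  by move: big; rewrite N0 /= Rmult_0_l; have := Rabs_pos C; lra.
by have := bound N N_gt0; have := Rle_abs C; lra.
Qed.

(* Summing the hypothesis over a partition into [N] equal steps telescopes to
   [|D b - D a| <= (b - a) (phi b - phi a) / N]. *)
Lemma eq_of_increment_bound (D phi : R -> R) a b : a <= b ->
  (forall x y, a <= x -> x <= y -> y <= b ->
     Rabs (D y - D x) <= (y - x) * (phi y - phi x)) ->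
  D b = D a.
Proof.
move=> ab incr_bound.
apply: (@eq_of_nat_mul_le _ _ ((b - a) * (phi b - phi a))) => N N_gt0.
have N_pos : 0 < INR N by apply/lt_0_INR/ssrnat.ltP.
pose h := (b - a) / INR N; pose x k := a + INR k * h.
have h_ge0 : 0 <= h by apply: Rdiv_le_0_compat; lra.
have Nh : INR N * h = b - a by rewrite /h; field; lra.
have x_in k : (k <= N)%N -> a <= x k <= b.
  by move=> /ssrnat.leP /le_INR kN; rewrite /x; have := pos_INR k; nra.
have telescope k : (k <= N)%N -> Rabs (D (x k) - D a) <= h * (phi (x k) - phi a).
  elim: k => [_|k IH kN].
    by rewrite /x /= Rmult_0_l Rplus_0_r Rminus_diag Rabs_R0; lra.
  have [[ak kb] [ak1 k1b]] := (x_in k (ltnW kN), x_in k.+1 kN).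
  have step : x k.+1 - x k = h by rewrite /x S_INR; ring.
  have := incr_bound (x k) (x k.+1) ak ltac:(lra) k1b; rewrite step.
  have := Rabs_triang (D (x k) - D a) (D (x k.+1) - D (x k)).
  have := IH (ltnW kN).
  by rewrite (_ : D (x k) - D a + _ = D (x k.+1) - D a); [lra | ring].
have := telescope N (leqnn N); rewrite (_ : x N = b); last by rewrite /x; lra.
by move=> /(Rmult_le_compat_l (INR N)) le; rewrite -Rmult_assoc Nh in le; apply: le; lra.
Qed.

Lemma RInt_monotone_bounds g x y : x <= y -> ex_RInt g x y ->
  (forall s, x < s < y -> g x <= g s <= g y) ->
  g x * (y - x) <= RInt g x y <= g y * (y - x).
Proof.
move=> xy ex_g g_mono.
have RInt_cst c : RInt (fun=> c) x y = c * (y - x).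
  by rewrite RInt_const /scal /= /mult /=; ring.
by split; rewrite -RInt_cst; apply: RInt_le => //; try exact: ex_RInt_const;
  move=> s /g_mono [].
Qed.

Section Young.
Variable phi : R -> R.
Hypothesis phiG : inG phi.

(* Young's equality [int_(-1)^x phi + int_(-1)^(phi x) phi^-1 = x phi x - 1],
   written as [D x = D (-1)]. *)
Let D x := RInt phi (-1) x + RInt (ginv phi) (-1) (phi x) - x * phi x.

Let D_increment x y : I11 x -> I11 y -> x <= y ->
  Rabs (D y - D x) <= (y - x) * (phi y - phi x).
Proof.
move=> Ix Iy xy; have Im1 : I11 (-1) by rewrite /I11; lra.
have [cphi cpsi] := (inG_cont phiG, inG_cont (inG_ginv phiG)).
have [mphi iphi] := (inG_maps phiG, inG_incr phiG).
have ipsi := inG_incr (inG_ginv phiG).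
have [Ipx Ipy] := (mphi x Ix, mphi y Iy).
have pxy : phi x <= phi y by apply: incr_on_I11_le.
have [lo_phi hi_phi] : phi x * (y - x) <= RInt phi x y <= phi y * (y - x).
  apply: RInt_monotone_bounds => //; first exact: ex_RInt_cont_on_I11.
  move=> s s_in; have Is : I11 s by rewrite /I11 in Ix Iy *; lra.
  by split; apply: incr_on_I11_le => //; lra.
have [lo_psi hi_psi] : ginv phi (phi x) * (phi y - phi x) <= RInt (ginv phi) (phi x) (phi y)
    <= ginv phi (phi y) * (phi y - phi x).
  apply: RInt_monotone_bounds => //; first exact: ex_RInt_cont_on_I11.
  move=> s s_in; have Is : I11 s by rewrite /I11 in Ipx Ipy *; lra.
  by split; apply: incr_on_I11_le => //; lra.
rewrite !ginvK // in lo_psi hi_psi.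
rewrite /D -(RInt_Chasles phi (-1) x y) -?(RInt_Chasles (ginv phi) (-1) (phi x) (phi y));
  try apply: ex_RInt_cont_on_I11 => //.
by rewrite /plus /=; apply: Rabs_le; split; nra.
Qed.

Lemma RInt_add_RInt_ginv : RInt phi (-1) 1 + RInt (ginv phi) (-1) 1 = 0.
Proof.
have : D 1 = D (-1).
  apply: (eq_of_increment_bound (phi := phi)) => [|x y mx xy y1]; first lra.
  by apply: D_increment => //; rewrite /I11; lra.
by rewrite /D (inG_m1 phiG) (inG_1 phiG) !RInt_point /zero /=; lra.
Qed.

End Young.

Lemma ex_RInt_comp_ginv f g : inG f -> inG g -> ex_RInt (fun t => f (ginv g t)) (-1) 1.
Proof. by move=> fG gG; apply/ex_RInt_inG/inG_comp/inG_ginv. Qed.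

Lemma Q_antisym f g : inG f -> inG g -> Q f g = - Q g f.
Proof.
move=> fG gG; have := RInt_add_RInt_ginv (inG_comp fG (inG_ginv gG)).
suff -> : RInt (ginv (fun t => f (ginv g t))) (-1) 1 = Q g f by rewrite /Q; lra.
apply: RInt_ext => t /I11_of_open It.
by rewrite ginv_comp ?ginvV //; [exact: ginv_I11 | exact: inG_ginv].
Qed.

Lemma Q_fstar f g : inG f -> inG g -> Q (fstar f) (fstar g) = - Q f g.
Proof.
move=> fG gG; rewrite /Q -RInt_fstar; last exact: ex_RInt_comp_ginv.
apply: RInt_ext => t /I11_of_open It.
by rewrite ginv_fstar // /fstar Ropp_involutive.
Qed.

Lemma Q_odot a1 b1 a2 b2 : inG a1 -> inG b1 -> inG a2 -> inG b2 ->
  Q (odot a1 b1) (odot a2 b2) = (Q a1 a2 + Q b1 b2) / 4.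
Proof.
move=> a1G b1G a2G b2G; rewrite /Q -RInt_odot; try exact: ex_RInt_comp_ginv.
apply: RInt_ext => t /I11_of_open It.
by rewrite ginv_odot // odot_comp //; exact: inG_ginv.
Qed.

Lemma Q_comp_r f g h : inG f -> inG g -> inG h ->
  Q (fun t => f (h t)) (fun t => g (h t)) = Q f g.
Proof.
move=> fG gG hG; apply: RInt_ext => t /I11_of_open It.
by rewrite ginv_comp // ginvKV //; exact: ginv_I11.
Qed.

Lemma Q_odd g1 g2 : inG00 g1 -> inG00 g2 -> Q g1 g2 = 0.
Proof.
move=> [g1G odd1] [g2G odd2]; apply: RInt_odd; first exact: ex_RInt_comp_ginv.
move=> t It; have It' := ginv_I11 g2G It.
have -> : ginv g2 (- t) = - ginv g2 t.
  by apply: ginv_eq; [exact: inG_incr | exact: I11_opp | rewrite odd2 // ginvKV].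
exact: odd1.
Qed.

Definition lin_indep n (F : vec n) : Prop :=
  forall c : 'I_n -> R,
    (forall t, I11 t -> \big[Rplus/0]_(k < n) (c k * F k t) = 0) -> forall k, c k = 0.

Definition lin_indep_with_id n (F : vec n) : Prop :=
  forall (c0 : R) (c : 'I_n -> R),
    (forall t, I11 t -> c0 * t + \big[Rplus/0]_(k < n) (c k * F k t) = 0) ->
    c0 = 0 /\ forall k, c k = 0.

Definition vfeven n (f : vec n) : vec n := fun k => feven (f k).

Section Vectors.
Variable n : nat.
Implicit Types (f g F G : vec n).

Lemma genericE f : generic f <-> lin_indep_with_id f /\ Qnonzero f.
Proof. by []. Qed.

Lemma strongly_genericE f : strongly_generic f <-> lin_indep (vfeven f) /\ Qnonzero f.
Proof. by []. Qed.

Lemma inG0n_inGn f : inG0n f -> inGn f.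
Proof. by move=> f0 i; case: (f0 i). Qed.

Lemma Qnonzero_scale f g a : a <> 0 ->
  (forall i j, Q (g i) (g j) = a * Q (f i) (f j)) -> Qnonzero f -> Qnonzero g.
Proof.
move=> a0 gf fnz i j ij; rewrite gf; apply: Rmult_integral_contrapositive.
by split; [exact: a0 | exact: fnz].
Qed.

Lemma Rdig_scale f g a : 0 < a ->
  (forall i j, Q (g i) (g j) = a * Q (f i) (f j)) -> dig_eq (Rdig g) (Rdig f).
Proof.
move=> a_gt0 gf i j; rewrite /Rdig gf; split => [afji|fji]; last exact: Rmult_lt_0_compat.
by apply: (Rmult_lt_reg_l a) => //; rewrite Rmult_0_r.
Qed.

Lemma lin_indep_scale F G a : a <> 0 ->
  (forall k t, I11 t -> G k t = a * F k t) -> lin_indep F -> lin_indep G.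
Proof.
move=> a0 GF indepF c sumG k.
suff : a * c k = 0 by case/Rmult_integral.
apply: (indepF (fun i => a * c i)) => t It; rewrite -[RHS](sumG t It).
apply: eq_bigr => i _.
by rewrite GF //; ring.
Qed.

End Vectors.

Section Reflection.
Variables (n : nat) (f : vec n).
Hypothesis fG : inGn f.

Lemma inG0n_vstar : inG0n f -> inG0n (vstar f).
Proof.
move=> f0 i; split; first exact/inG_fstar/fG.
by rewrite /vstar RInt_fstar ?(proj2 (f0 i)) ?Ropp_0 //; apply/ex_RInt_inG/fG.
Qed.

Lemma Q_vstar i j : Q (vstar f i) (vstar f j) = - Q (f i) (f j).
Proof. exact: Q_fstar. Qed.

Lemma Rdig_vstar : dig_eq (Rdig (vstar f)) (rev_dig (Rdig f)).
Proof. by move=> i j; rewrite /Rdig /rev_dig Q_vstar (Q_antisym (fG j) (fG i)) Ropp_involutive. Qed.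

Lemma Qnonzero_vstar : Qnonzero f -> Qnonzero (vstar f).
Proof.
apply: Qnonzero_scale (Ropp_neq_0_compat _ R1_neq_R0) _ => i j.
by rewrite Q_vstar; ring.
Qed.

Lemma generic_vstar : generic f -> generic (vstar f).
Proof.
move=> /genericE [indep fnz]; apply/genericE; split; last exact: Qnonzero_vstar.
move=> c0 c sum0.
suff [c0_0 c_0] : - c0 = 0 /\ forall k, - c k = 0.
  by split=> [|k]; [lra | have := c_0 k; lra].
apply: indep => t It; rewrite -[RHS](sum0 (- t) (I11_opp It)); congr (_ + _); first ring.
by apply: eq_bigr => k _; rewrite /vstar /fstar Ropp_involutive; ring.
Qed.

Lemma strongly_generic_vstar : strongly_generic f -> strongly_generic (vstar f).
Proof.
move=> /strongly_genericE [indep fnz]; apply/strongly_genericE; split; last exact: Qnonzero_vstar.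
apply: lin_indep_scale (Ropp_neq_0_compat _ R1_neq_R0) _ indep => k t _.
by rewrite /vfeven /vstar /feven /fstar Ropp_involutive; field.
Qed.

End Reflection.

(* Parts (b) and (c) at once: [g = f] with [lam = 1], and odd [g] with [lam = 0]. *)
Section Concatenated.
Variables (n : nat) (g f : vec n) (lam : R).
Hypotheses (f0 : inG0n f) (gG : inGn g) (g0 : forall i, RInt (g i) (-1) 1 = 0).
Hypothesis lam_ge0 : 0 <= lam.
Hypothesis Q_g : forall i j, Q (g i) (g j) = lam * Q (f i) (f j).
Hypothesis g_even : forall k u, I11 u -> g k u + g k (- u) = lam * (f k u + f k (- u)).

Let fG : inGn f := inG0n_inGn f0.

Lemma Q_vodot i j : Q (vodot g f i) (vodot g f j) = (1 + lam) / 4 * Q (f i) (f j).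
Proof.
rewrite /vodot Q_odot; first by rewrite Q_g; field.
all: by [apply: gG | apply: fG].
Qed.

Lemma inG0n_vodot : inG0n (vodot g f).
Proof.
move=> i; have [giG fiG] := (gG i, fG i); split; first exact: inG_odot.
rewrite /vodot (RInt_odot (ex_RInt_inG giG) (ex_RInt_inG fiG)) g0 (proj2 (f0 i)).
by rewrite /Rdiv Rplus_0_l Rmult_0_l.
Qed.

Lemma Qnonzero_vodot : Qnonzero f -> Qnonzero (vodot g f).
Proof. by apply: Qnonzero_scale Q_vodot; lra. Qed.

Lemma vodot_hi k u : I11 u -> vodot g f k ((u + 1) / 2) = (f k u + 1) / 2.
Proof.
move=> Iu; rewrite /vodot (odot_right (inG_1 (gG k)) (inG_m1 (fG k))); last first.
  by rewrite /I11 in Iu; lra.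
by have -> : 2 * ((u + 1) / 2) - 1 = u by field.
Qed.

Lemma vodot_lo k u : I11 u -> vodot g f k (- ((u + 1) / 2)) = (g k (- u) - 1) / 2.
Proof.
move=> Iu; rewrite /vodot odot_left; last by rewrite /I11 in Iu; lra.
by have -> : 2 * - ((u + 1) / 2) + 1 = - u by field.
Qed.

Let I11_half u : I11 u -> I11 ((u + 1) / 2).
Proof. by rewrite /I11; lra. Qed.

Lemma generic_vodot : generic f -> generic (vodot g f).
Proof.
move=> /genericE [indep fnz]; apply/genericE; split; last exact: Qnonzero_vodot.
move=> c0 c sum0.
have sum_hi u : I11 u -> c0 * u + \big[Rplus/0]_(k < n) (c k * f k u)
    + (c0 + \big[Rplus/0]_(k < n) c k) = 0.
  move=> Iu; have := sum0 _ (I11_half Iu).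
  rewrite (eq_bigr (fun k => / 2 * (c k * f k u) + / 2 * c k)) => [|k _]; last first.
    by rewrite vodot_hi //; field.
  by rewrite big_split -!big_distrr /=; lra.
have S0 : c0 + \big[Rplus/0]_(k < n) c k = 0.
  have sum_f1 : \big[Rplus/0]_(k < n) (c k * f k 1) = \big[Rplus/0]_(k < n) c k.
    by apply: eq_bigr => k _; rewrite (inG_1 (fG k)); ring.
  by have := sum_hi 1 ltac:(rewrite /I11; lra); rewrite sum_f1; lra.
suff [c0_0 c_0] : c0 = 0 /\ forall k, c k = 0 by [].
by apply: indep => u Iu; have := sum_hi u Iu; rewrite S0; lra.
Qed.

Lemma strongly_generic_vodot : strongly_generic f -> strongly_generic (vodot g f).
Proof.
move=> /strongly_genericE [indep fnz]; apply/strongly_genericE; split; last exact: Qnonzero_vodot.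
move=> c sum0 k.
have sum_hi u : I11 u -> \big[Rplus/0]_(k < n) (c k * ((f k u + g k (- u)) / 4)) = 0.
  move=> Iu; rewrite -[RHS](sum0 _ (I11_half Iu)); apply: eq_bigr => i _.
  by rewrite /vfeven /feven vodot_hi // vodot_lo //; field.
(* Adding the identity at [u] and at [-u] trades [g] for [lam f] by [g_even]. *)
suff : (1 + lam) / 2 * c k = 0 by case/Rmult_integral => //; lra.
apply: (indep (fun i => (1 + lam) / 2 * c i)) => u Iu.
have := f_equal2 Rplus (sum_hi u Iu) (sum_hi (- u) (I11_opp Iu)).
rewrite -big_split Rplus_0_l => sum_sym; rewrite -[RHS]sum_sym.
apply: eq_bigr => i _ /=.
rewrite /vfeven /feven Ropp_involutive.
have -> : g i u = lam * (f i u + f i (- u)) - g i (- u) by have := g_even i Iu; lra.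
by field.
Qed.

Lemma vodot_spec :
  inG0n (vodot g f) /\ dig_eq (Rdig (vodot g f)) (Rdig f) /\
  (generic f -> generic (vodot g f)) /\
  (strongly_generic f -> strongly_generic (vodot g f)).
Proof.
split; first exact: inG0n_vodot.
split; first by apply: Rdig_scale Q_vodot; lra.
by split; [exact: generic_vodot | exact: strongly_generic_vodot].
Qed.

End Concatenated.

Section Permutation.
Variables (n : nat) (pi : 'S_n).
Implicit Types (f F : vec n).

Lemma sum_pvec (c : 'I_n -> R) F t :
  \big[Rplus/0]_(k < n) (c k * pvec pi F k t) = \big[Rplus/0]_(k < n) (c (pi k) * F k t).
Proof. by rewrite (reindex_inj (@perm_inj _ pi)); apply: eq_bigr => k _; rewrite /pvec permK. Qed.

Lemma lin_indep_pvec F : lin_indep F -> lin_indep (pvec pi F).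
Proof.
move=> indep c sum0 k; rewrite -(permKV pi k).
by apply: (indep (fun k => c (pi k))) => t It; rewrite -sum_pvec; apply: sum0.
Qed.

Lemma lin_indep_with_id_pvec F : lin_indep_with_id F -> lin_indep_with_id (pvec pi F).
Proof.
move=> indep c0 c sum0.
have [c0_0 c_0] : c0 = 0 /\ forall k, c (pi k) = 0.
  by apply: indep => t It; rewrite -sum_pvec; apply: sum0.
by split=> // k; rewrite -(permKV pi k).
Qed.

Lemma Qnonzero_pvec f : Qnonzero f -> Qnonzero (pvec pi f).
Proof. by move=> fnz i j ij; apply: fnz => /perm_inj. Qed.

Lemma Rdig_pvec f : dig_eq (Rdig (pvec pi f)) (perm_dig pi (Rdig f)).
Proof.
move=> a b; rewrite /Rdig /pvec /perm_dig; split=> [fab | [i [j [fij [-> ->]]]]].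
  by exists (pi^-1 a)%g, (pi^-1 b)%g; rewrite !permKV.
by rewrite !permK.
Qed.

Lemma generic_pvec f : generic f -> generic (pvec pi f).
Proof.
move=> /genericE [indep fnz]; apply/genericE.
by split; [apply: lin_indep_with_id_pvec | apply: Qnonzero_pvec].
Qed.

Lemma strongly_generic_pvec f : strongly_generic f -> strongly_generic (pvec pi f).
Proof.
move=> /strongly_genericE [indep fnz]; apply/strongly_genericE.
by split; [apply: (lin_indep_pvec indep) | apply: Qnonzero_pvec].
Qed.

End Permutation.

Lemma Rdig_rho n (f : vec n) h : inGn f -> inG h -> dig_eq (Rdig (rho h f)) (Rdig f).
Proof. by move=> fG hG i j; rewrite /Rdig /rho Q_comp_r. Qed.

Theorem proposition4p16 (n : nat) (f : vec n) :
  inG0n f ->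
  (* (a) *)
  (inG0n (vstar f) /\ dig_eq (Rdig (vstar f)) (rev_dig (Rdig f)) /\
   (generic f -> generic (vstar f)) /\
   (strongly_generic f -> strongly_generic (vstar f))) /\
  (* (b) *)
  (inG0n (vodot f f) /\ dig_eq (Rdig (vodot f f)) (Rdig f) /\
   (generic f -> generic (vodot f f)) /\
   (strongly_generic f -> strongly_generic (vodot f f))) /\
  (* (c) *)
  (forall g : vec n, inG00n g ->
   inG0n (vodot g f) /\ dig_eq (Rdig (vodot g f)) (Rdig f) /\
   (generic f -> generic (vodot g f)) /\
   (strongly_generic f -> strongly_generic (vodot g f))) /\
  (* (d) *)
  (forall h : R -> R, inG h ->
   inGn (rho h f) /\ dig_eq (Rdig (rho h f)) (Rdig f)) /\
  (* (e) *)
  (forall pi : 'S_n,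
   inG0n (pvec pi f) /\ dig_eq (Rdig (pvec pi f)) (perm_dig pi (Rdig f)) /\
   (generic f -> generic (pvec pi f)) /\
   (strongly_generic f -> strongly_generic (pvec pi f))).
Proof.
move=> f0; have fG := inG0n_inGn f0.
split.
  split; first exact: inG0n_vstar.
  split; first exact: Rdig_vstar.
  by split; [exact: generic_vstar | exact: strongly_generic_vstar].
split.
  have f_int i : RInt (f i) (-1) 1 = 0 := proj2 (f0 i).
  by apply: (vodot_spec (lam := 1)) => //; [lra | move=> *; ring ..].
split.
  move=> g g00; have gG i : inG (g i) := proj1 (g00 i).
  apply: (vodot_spec (lam := 0)) => //.
  - by move=> i; apply: RInt_odd (ex_RInt_inG (gG i)) (proj2 (g00 i)).
  - lra.
  - by move=> i j; rewrite Q_odd //; ring.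
  - by move=> k u Iu; rewrite (proj2 (g00 k)) //; ring.
split.
  by move=> h hG; split=> [i|]; [exact: inG_comp | exact: Rdig_rho].
move=> pi; split; first by move=> i; apply: f0.
split; first exact: Rdig_pvec.
by split; [exact: generic_pvec | exact: strongly_generic_pvec].
Qed.
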